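(* Let $n\ge2$, $f\in C(\mathbb{R}^{n+1},\mathbb{R}^n)$ be $\kappa$-Lipschitz and $\mathbb{Z}^{n+1}$-periodic in $(r,\tau)$, and let $v(\tau;c)$ solve $\dot v=f(v,\tau)$, $v(0)=c\in\mathbb{R}^n$. Assume there is $C_0>0$ with $v_i(\tau;c^2)-v_i(\tau;c^1)\le C_0$ for all $i$, $\tau>0$ and all $c^1,c^2\in\mathbb{R}^n$ with $c^1-c^2\in[0,1]^n$. Then for all $\sigma,l,t>0$, all $c\in\mathbb{R}^n$ and all $i\in\{1,\dots,n\}$, \[v_i((\sigma+l)t;(\sigma+l)c)\le v_i(\sigma t;\sigma c)+v_i(lt;lc)+2(\|f_i\|_\infty+C_0+1).\] *)

From Stdlib Require Import Reals ZArith.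
From mathcomp Require Import ssreflect ssrbool eqtype ssrnat fintype.
Open Scope R_scope.

Definition vec (n : nat) := 'I_n -> R.

Definition field (n : nat) := vec n -> R -> vec n.

Definition vscale {n} (a : R) (x : vec n) : vec n := fun j => a * x j.

Definition lipschitz {n} (kappa : R) (f : field n) : Prop :=
  forall (r r' : vec n) (tau tau' d : R),
    (forall j, Rabs (r j - r' j) <= d) -> Rabs (tau - tau') <= d ->
    forall i, Rabs (f r tau i - f r' tau' i) <= kappa * d.

Definition continuous_field {n} (f : field n) : Prop :=
  forall r tau i (eps : R), eps > 0 -> exists delta, delta > 0 /\
    forall r' tau', (forall j, Rabs (r j - r' j) < delta) ->
      Rabs (tau - tau') < delta -> Rabs (f r tau i - f r' tau' i) < eps.

Definition periodic_field {n} (f : field n) : Prop :=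
  forall (r : vec n) (tau : R) (z : 'I_n -> Z) (m : Z),
    f (fun j => r j + IZR (z j)) (tau + IZR m) = f r tau.

(* v c tau = v(tau; c) solves  v' = f(v, tau), v(0) = c  (on all of R) *)
Definition is_flow {n} (f : field n) (v : vec n -> R -> vec n) : Prop :=
  forall c : vec n, v c 0 = c /\
    forall (tau : R) (i : 'I_n),
      derivable_pt_lim (fun s => v c s i) tau (f (v c tau) tau i).

Definition is_supnorm_comp {n} (f : field n) (i : 'I_n) (M : R) : Prop :=
  is_lub (fun y => exists r tau, y = Rabs (f r tau i)) M.

(* Solutions of a Z^(n+1)-periodic Lipschitz equation are unique (Gronwall), hence
   commute with integer translations of the initial datum and with integer time
   shifts.  Split the time (σ+l)t at k = ⌊lt⌋.  At time k the solution from (σ+l)c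
   is compared, after rounding the offset σc to an integer vector, with the solution
   from lc; over the remaining time σt + (lt - k) it is compared in the same way
   with the solution from σc.  Each comparison costs 1 + C0, and the two
   fractional time intervals lt - k < 1 cost at most ||f_i||_∞ each. *)
From Stdlib Require Import Reals Lra Lia.
From mathcomp Require Import ssreflect ssrbool eqtype ssrnat fintype seq.
Open Scope R_scope.

Set Implicit Arguments.
Unset Strict Implicit.

Section ListSum.
Variable I : eqType.

Definition lsum (L : seq I) (a : I -> R) : R := foldr (fun j acc => a j + acc) 0 L.

Lemma lsum_le L (a b : I -> R) : (forall j, a j <= b j) -> lsum L a <= lsum L b.
Proof. by move=> ab; elim: L => [|j L IH] /=; [lra | have := ab j; lra]. Qed.

Lemma lsum_const L (B : R) : lsum L (fun _ => B) = INR (size L) * B.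
Proof.
elim: L => [|j L IH]; first by rewrite /=; ring.
by rewrite [lsum _ _]/= IH (S_INR (size L)); ring.
Qed.

Lemma lsum_eq0 L (a : I -> R) : (forall j, a j = 0) -> lsum L a = 0.
Proof. by move=> a0; elim: L => [|j L IH] //=; rewrite IH a0; ring. Qed.

Lemma lsum_ge0 L (a : I -> R) : (forall j, 0 <= a j) -> 0 <= lsum L a.
Proof. by move=> a0; elim: L => [|j L IH] /=; [lra | have := a0 j; lra]. Qed.

Lemma le_lsum_mem L (a : I -> R) j :
  (forall k, 0 <= a k) -> j \in L -> a j <= lsum L a.
Proof.
move=> a0; elim: L => [|k L IH] //=; rewrite in_cons => /orP [/eqP <- | jL].
- by have := lsum_ge0 L a0; lra.
- by have := IH jL; have := a0 k; lra.
Qed.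

Lemma derivable_pt_lim_lsum L (a : R -> I -> R) (a' : I -> R) t :
  (forall j, derivable_pt_lim (fun s => a s j) t (a' j)) ->
  derivable_pt_lim (fun s => lsum L (a s)) t (lsum L a').
Proof.
move=> da; elim: L => [|j L IH] /=; first exact: derivable_pt_lim_const.
exact: derivable_pt_lim_plus.
Qed.

End ListSum.

Lemma Rabs_le_inv x y : Rabs x <= y -> - y <= x <= y.
Proof. by split_Rabs; lra. Qed.

Lemma gronwall_zero (S S' : R -> R) (K a b : R) :
  (forall t, derivable_pt_lim S t (S' t)) -> (forall t, S' t <= K * S t) ->
  (forall t, 0 <= S t) -> S a = 0 -> a <= b -> S b = 0.
Proof.
move=> dS S'_le S_ge0 Sa0 /Rle_lt_or_eq_dec [ab | <- //].
(* S(s) e^(-Ks) is nonincreasing and vanishes at a. *)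
pose h s := S s * exp (- (K * s)).
have dh t : derivable_pt_lim h t (exp (- (K * t)) * (S' t - K * S t)).
  have dlin : derivable_pt_lim (fun s => - (K * s)) t (- K).
    have := derivable_pt_lim_opp _ _ _ (derivable_pt_lim_scal id K t 1 (derivable_pt_lim_id t)).
    by rewrite Rmult_1_r.
  have dexp := derivable_pt_lim_comp _ _ _ _ _ dlin (derivable_pt_lim_exp (- (K * t))).
  have := derivable_pt_lim_mult _ _ _ _ _ (dS t) dexp.
  by congr derivable_pt_lim; rewrite /comp; ring.
have [c [hc _]] := MVT_cor2 h _ a b ab (fun c _ => dh c).
have hb : S b * exp (- (K * b)) <= 0.
  have : exp (- (K * c)) * (S' c - K * S c) <= 0.
    by have := S'_le c; have := exp_pos (- (K * c)); nra.
  rewrite /h Sa0 Rmult_0_l Rminus_0_r in hc; rewrite hc; nra.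
have := S_ge0 b; have := exp_pos (- (K * b)); nra.
Qed.

Lemma exists_floor_nonneg (s : R) :
  0 <= s -> exists k : Z, 0 <= IZR k <= s /\ s < IZR k + 1.
Proof.
move=> s0; exists (Int_part s); have [ks sk] := base_Int_part s.
have : (-1 < Int_part s)%Z by apply: lt_IZR; lra.
by move=> k0; have := IZR_le 0 (Int_part s) ltac:(lia); lra.
Qed.

Section Flow.
Variables (n : nat) (f : field n) (kappa : R).
Hypothesis f_lip : lipschitz kappa f.

Lemma field_ext (r r' : vec n) tau i : (forall j, r j = r' j) -> f r tau i = f r' tau i.
Proof.
move=> rr'.
have d0 j : Rabs (r j - r' j) <= 0 by rewrite rr' Rminus_diag Rabs_R0; lra.
have t0 : Rabs (tau - tau) <= 0 by rewrite Rminus_diag Rabs_R0; lra.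
by have := f_lip d0 t0 i; rewrite Rmult_0_r => /Rabs_le_inv; lra.
Qed.

Definition sqdist (x y : vec n) : R := lsum (enum 'I_n) (fun j => (x j - y j)²).

Lemma sqdist_ge0 x y : 0 <= sqdist x y.
Proof. by apply: lsum_ge0 => j; apply: Rle_0_sqr. Qed.

Lemma dist_le_sqrt_sqdist x y j : Rabs (x j - y j) <= sqrt (sqdist x y).
Proof.
rewrite -sqrt_Rsqr_abs; apply/sqrt_le_1_alt/le_lsum_mem; last by rewrite mem_enum.
by move=> k; apply: Rle_0_sqr.
Qed.

Lemma field_inner_le x y t j :
  2 * (x j - y j) * (f x t j - f y t j) <= 2 * kappa * sqdist x y.
Proof.
set q := sqrt (sqdist x y).
have dx := dist_le_sqrt_sqdist x y.
have dt : Rabs (t - t) <= q by rewrite Rminus_diag Rabs_R0; apply: sqrt_pos.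
have df := f_lip dx dt j.
have := Rmult_le_compat _ _ _ _ (Rabs_pos _) (Rabs_pos _) (dx j) df.
rewrite -Rabs_mult -/q => /(Rle_trans _ _ _ (Rle_abs _)).
by have := sqrt_sqrt _ (sqdist_ge0 x y); rewrite -/q; nra.
Qed.

Definition is_solution (x : R -> vec n) : Prop :=
  forall t i, derivable_pt_lim (fun s => x s i) t (f (x t) t i).

Lemma solution_unique (x y : R -> vec n) a b :
  is_solution x -> is_solution y -> (forall j, x a j = y a j) -> a <= b ->
  forall i, x b i = y b i.
Proof.
move=> solx soly xya ab i.
pose S' t := lsum (enum 'I_n) (fun j => 2 * (x t j - y t j) * (f (x t) t j - f (y t) t j)).
have dS t : derivable_pt_lim (fun s => sqdist (x s) (y s)) t (S' t).
  apply: derivable_pt_lim_lsum => j.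
  have := derivable_pt_lim_comp _ _ _ _ _
    (derivable_pt_lim_minus _ _ _ _ _ (solx t j) (soly t j)) (derivable_pt_lim_Rsqr _).
  by congr derivable_pt_lim; ring.
have S'_le t : S' t <= INR (size (enum 'I_n)) * (2 * kappa) * sqdist (x t) (y t).
  by rewrite Rmult_assoc -lsum_const; apply: lsum_le => j; apply: field_inner_le.
have Sa0 : sqdist (x a) (y a) = 0.
  by apply: lsum_eq0 => j /=; rewrite xya Rminus_diag Rsqr_0.
have Sb0 := gronwall_zero dS S'_le (fun t => sqdist_ge0 _ _) Sa0 ab.
by have := dist_le_sqrt_sqdist (x b) (y b) i; rewrite Sb0 sqrt_0 => /Rabs_le_inv; lra.
Qed.

Hypothesis f_per : periodic_field f.

Lemma field_periodic_time r tau (m : Z) i : f r (tau + IZR m) i = f r tau i.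
Proof. by rewrite -(f_per r tau (fun _ => 0%Z) m); apply: field_ext => j; ring. Qed.

Variable v : vec n -> R -> vec n.
Hypothesis v_flow : is_flow f v.

Lemma flow_solution c : is_solution (v c).
Proof. exact: (proj2 (v_flow c)). Qed.

Lemma flow_translate c (z : 'I_n -> Z) tau i :
  0 <= tau -> v (fun j => c j + IZR (z j)) tau i = v c tau i + IZR (z i).
Proof.
move=> tau0.
apply: (solution_unique (y := fun s j => v c s j + IZR (z j)) (flow_solution _) _ _ tau0).
- move=> t j; have := derivable_pt_lim_plus _ _ _ _ _
    (flow_solution c t j) (derivable_pt_lim_const (IZR (z j)) t).
  have := f_per (v c t) t z 0%Z; rewrite Rplus_0_r => ->.
  by rewrite Rplus_0_r.
- by move=> j; rewrite !(proj1 (v_flow _)).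
Qed.

Lemma flow_shift_time c (k : Z) T i :
  IZR k <= T -> v c T i = v (v c (IZR k)) (T - IZR k) i.
Proof.
move=> kT.
apply: (solution_unique (y := fun s => v (v c (IZR k)) (s - IZR k)) (flow_solution c) _ _ kT).
- move=> t j.
  have dshift : derivable_pt_lim (fun s => s - IZR k) t 1.
    have := derivable_pt_lim_minus _ _ _ _ _ (derivable_pt_lim_id t) (derivable_pt_lim_const (IZR k) t).
    by rewrite Rminus_0_r.
  have := derivable_pt_lim_comp _ _ _ _ _ dshift (flow_solution (v c (IZR k)) (t - IZR k) j).
  rewrite Rmult_1_r -(field_periodic_time _ _ k).
  by congr derivable_pt_lim; congr f; ring.
- by move=> j; rewrite Rminus_diag (proj1 (v_flow _)).
Qed.

Lemma flow_increment_le c i B a b :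
  (forall r tau, Rabs (f r tau i) <= B) -> a <= b ->
  Rabs (v c b i - v c a i) <= B * (b - a).
Proof.
move=> fB ab; have [s [-> _]] := MVT_abs _ _ a b (fun s _ => flow_solution c s i).
rewrite (Rabs_right (b - a)); last lra.
by apply: Rmult_le_compat_r; [lra | apply: fB].
Qed.

Variable C0 : R.
Hypothesis C0_ge0 : 0 <= C0.
Hypothesis flow_oscillation : forall c1 c2 : vec n, (forall j, 0 <= c1 j - c2 j <= 1) ->
  forall i tau, tau > 0 -> v c2 tau i - v c1 tau i <= C0.

(* Round c' - c up to an integer vector z: c + z lies in c' + [0,1]^n. *)
Lemma flow_le_initial_offset c c' tau i :
  0 <= tau -> v c' tau i <= v c tau i + (c' i - c i) + 1 + C0.
Proof.
move=> /Rle_lt_or_eq_dec [tau0 | <-]; last by rewrite !(proj1 (v_flow _)); lra.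
pose z j := up (c' j - c j).
have box j : 0 <= c j + IZR (z j) - c' j <= 1.
  by have := archimed (c' j - c j); rewrite /z; lra.
have := flow_oscillation box i tau0.
rewrite flow_translate; last lra.
by have := archimed (c' i - c i); rewrite /z; lra.
Qed.

End Flow.

Theorem lemma3p2 (n : nat) (f : field n) (kappa : R)
  (v : vec n -> R -> vec n) (C0 : R) (M : 'I_n -> R) :
  (2 <= n)%N ->
  continuous_field f ->
  lipschitz kappa f ->
  periodic_field f ->
  is_flow f v ->
  (forall i, is_supnorm_comp f i (M i)) ->
  C0 > 0 ->
  (forall c1 c2 : vec n, (forall j, 0 <= c1 j - c2 j <= 1) ->
     forall (i : 'I_n) (tau : R), tau > 0 -> v c2 tau i - v c1 tau i <= C0) ->
  forall (sigma l t : R) (c : vec n) (i : 'I_n),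
    sigma > 0 -> l > 0 -> t > 0 ->
    v (vscale (sigma + l) c) ((sigma + l) * t) i <=
      v (vscale sigma c) (sigma * t) i + v (vscale l c) (l * t) i
      + 2 * (M i + C0 + 1).
Proof.
move=> _ _ f_lip f_per v_flow f_sup C0_pos osc sigma l t c i sigma0 l0 t0.
have f_le_M r tau : Rabs (f r tau i) <= M i by apply: (proj1 (f_sup i)); exists r, tau.
have M0 := Rle_trans _ _ _ (Rabs_pos _) (f_le_M (fun _ => 0) 0).
have incr := flow_increment_le v_flow.
have cmp := flow_le_initial_offset f_lip f_per v_flow (Rlt_le _ _ C0_pos) osc.
have [k [[k0 klt] ltk]] := exists_floor_nonneg (Rlt_le _ _ (Rmult_lt_0_compat _ _ l0 t0)).
set delta := l * t - IZR k.
set Q := v (vscale (sigma + l) c) (IZR k).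
have split_time : v (vscale (sigma + l) c) ((sigma + l) * t) i = v Q (sigma * t + delta) i.
  rewrite (flow_shift_time f_lip f_per v_flow _ _ (k := k)); last by nra.
  by congr v; rewrite /delta; ring.
have run_Q : v Q (sigma * t + delta) i <= v Q (sigma * t) i + M i * delta.
  have := Rabs_le_inv (incr Q i _ (sigma * t) (sigma * t + delta) f_le_M ltac:(rewrite /delta; lra)).
  lra.
have cmp_sigma := cmp (vscale sigma c) Q (sigma * t) i ltac:(nra).
have cmp_l := cmp (vscale l c) (vscale (sigma + l) c) (IZR k) i k0.
have run_l : v (vscale l c) (IZR k) i <= v (vscale l c) (l * t) i + M i * delta.
  by have := Rabs_le_inv (incr (vscale l c) i _ _ _ f_le_M klt); rewrite /delta; lra.
have : M i * delta <= M i by rewrite /delta; nra.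
have : vscale (sigma + l) c i = vscale sigma c i + vscale l c i by rewrite /vscale; ring.
by rewrite split_time -/Q in cmp_l *; lra.
Qed.
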